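(* Let $0<\alpha\le 5\pi/6$. Let $E^{nr}_\alpha\subseteq E_\alpha$ be the set of edges of $E_\alpha$ that are not redundant. Then for all $u,v\in V$: $u$ and $v$ are connected in $(V,E^{nr}_\alpha)$ if and only if they are connected in $G_R$. More precisely, for every redundant edge $\{u,v\}\in E_\alpha$ there is a path from $u$ to $v$ consisting only of edges in $E^{nr}_\alpha$.
   Context: Let $V$ be a finite set of pairwise distinct points (nodes) in the Euclidean plane, $d$ the Euclidean distance, and $R>0$. Let $G_R=(V,E)$ be the undirected graph with $E=\{\{u,v\}: u\neq v,\ d(u,v)\le R\}$. Fix a finite increasing sequence of radius levels $0<r_1<r_2<\dots<r_k=R$. For $u\in V$ and $1\le i\le k$ let $S_i(u)=\{v\in V\setminus\{u\}: d(u,v)\le r_i\}$. For $0<\alpha<2\pi$, a closed cone of width $\alpha$ with apex $u$ is a set $\{u+t(\cos\varphi,\sin\varphi): t\ge 0,\ \varphi\in[\theta-\alpha/2,\theta+\alpha/2]\}$ for some $\theta$. A finite set $S\subseteq V\setminus\{u\}$ has an $\alpha$-gap (at $u$) if some closed cone of width $\alpha$ with apex $u$ contains no node of $S$ (in particular $\emptyset$ has an $\alpha$-gap). The algorithm CBTC($\alpha$) assigns to each $u$ the index $i_u$ = the least $i\in\{1,\dots,k\}$ such that $S_i(u)$ has no $\alpha$-gap, or $i_u=k$ if there is no such $i$; set $N_\alpha(u)=S_{i_u}(u)$ and $N_\alpha=\{(u,v): v\in N_\alpha(u)\}$. Let $E_\alpha=\{\{u,v\}: (u,v)\in N_\alpha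 \text{ or } (v,u)\in N_\alpha\}$ (the symmetric closure of $N_\alpha$) and $G_\alpha=(V,E_\alpha)$. Each node $u$ has a distinct integer identifier $\mathrm{ID}_u$. The edge ID of $\{u,v\}$ is the triple $\mathrm{eid}(u,v)=(d(u,v),\max(\mathrm{ID}_u,\mathrm{ID}_v),\min(\mathrm{ID}_u,\mathrm{ID}_v))$, and edge IDs are compared lexicographically. An edge $\{u,v\}\in E_\alpha$ is redundant if, for one of its endpoints, say $u$, there is $w\in V$ with $\{u,w\}\in E_\alpha$, $\angle vuw<\pi/3$, and $\mathrm{eid}(u,v)>\mathrm{eid}(u,w)$. *)

From Stdlib Require Import Reals Lra List ZArith Relations.
Open Scope R_scope.

Definition point : Type := (R * R)%type.

Definition dist (p q : point) : R :=
  sqrt ((fst p - fst q) ^ 2 + (snd p - snd q) ^ 2).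

Definition angle (v u w : point) : R :=
  acos (((fst v - fst u) * (fst w - fst u) + (snd v - snd u) * (snd w - snd u))
        / (dist u v * dist u w)).

Definition in_cone (u : point) (theta alpha : R) (p : point) : Prop :=
  exists t phi, 0 <= t /\ theta - alpha / 2 <= phi <= theta + alpha / 2 /\
    p = (fst u + t * cos phi, snd u + t * sin phi).

Definition has_gap (alpha : R) (u : point) (S : point -> Prop) : Prop :=
  exists theta, forall p, S p -> ~ in_cone u theta alpha p.

Section CBTC.
Variables (V : list point) (r : nat -> R) (k : nat) (alpha : R).

Definition Sball (i : nat) (u : point) (v : point) : Prop :=
  In v V /\ v <> u /\ dist u v <= r i.

Definition is_iu (u : point) (i : nat) : Prop :=
  (1 <= i <= k)%nat /\
  ((~ has_gap alpha u (Sball i u) /\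
    forall j, (1 <= j < i)%nat -> has_gap alpha u (Sball j u))
   \/ (i = k /\ forall j, (1 <= j <= k)%nat -> has_gap alpha u (Sball j u))).

Definition Nalpha (u v : point) : Prop :=
  In u V /\ exists i, is_iu u i /\ Sball i u v.

Definition Ealpha (u v : point) : Prop := Nalpha u v \/ Nalpha v u.

Variable ID : point -> Z.

Definition eid_gt (u v u' v' : point) : Prop :=
  dist u v > dist u' v' \/
  (dist u v = dist u' v' /\
   ((Z.max (ID u) (ID v) > Z.max (ID u') (ID v'))%Z \/
    (Z.max (ID u) (ID v) = Z.max (ID u') (ID v') /\
     (Z.min (ID u) (ID v) > Z.min (ID u') (ID v'))%Z))).

Definition redundant_at (u v : point) : Prop :=
  exists w, In w V /\ Ealpha u w /\ angle v u w < PI / 3 /\ eid_gt u v u w.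

Definition redundant (u v : point) : Prop :=
  Ealpha u v /\ (redundant_at u v \/ redundant_at v u).

Definition Enr (u v : point) : Prop := Ealpha u v /\ ~ redundant u v.

End CBTC.

Definition GR_edge (V : list point) (Rmax : R) (u v : point) : Prop :=
  In u V /\ In v V /\ u <> v /\ dist u v <= Rmax.

Definition connected_in (E : point -> point -> Prop) (u v : point) : Prop :=
  clos_refl_trans point E u v.

(* Induction on edge IDs over the pairs of nodes at distance at most [R].  A redundant edge [{u,v}], witnessed at [u] by [w], is bypassed
   through [w]: [{u,w}] has a smaller ID, and [angle v u w < PI/3] with [|uw| <= |uv|] forces
   [|wv| < |uv|].  If [{u,v}] is not in [E_alpha], both [u] and [v] stopped growing their radius
   below [|uv|] with gap-free neighbourhoods.  Either some neighbour of one endpoint is closer to the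
   other endpoint, or the neighbours of [u] and of [v] nearest to the line [uv] on a common side span
   a quadrilateral [u p q v] whose angles at [u] and [v] sum to at most [alpha <= 5 PI / 6], and then
   [|pq| < |uv|].  Every hop of the resulting path is shorter than [|uv|]. *)

From Stdlib Require Import Reals List ZArith Lra Lia Psatz Classical Relations.
Open Scope R_scope.

Section ListMinimal.
Variables (A : Type) (lt : A -> A -> Prop).
Hypotheses (lt_trans : forall a b c, lt a b -> lt b c -> lt a c)
           (lt_irrefl : forall a, ~ lt a a).

Lemma list_exists_minimal (L : list A) (Q : A -> Prop) :
  (exists x, In x L /\ Q x) ->
  exists m, In m L /\ Q m /\ forall b, In b L -> Q b -> ~ lt b m.
Proof.
  induction L as [|a L IH]; intros [x [Hx Qx]]; [destruct Hx|].
  destruct (classic (exists y, In y L /\ Q y)) as [HL|HL].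
  - destruct (IH HL) as [m [Hm [Qm Hmin]]].
    destruct (classic (Q a /\ lt a m)) as [[Qa Ham]|Ham].
    + exists a; split; [left; reflexivity|split; [exact Qa|]].
      intros b [<-|Hb] Qb Hba; [exact (lt_irrefl _ Hba)|].
      exact (Hmin b Hb Qb (lt_trans _ _ _ Hba Ham)).
    + exists m; split; [right; exact Hm|split; [exact Qm|]].
      intros b [<-|Hb] Qb; [tauto|exact (Hmin b Hb Qb)].
  - destruct Hx as [<-|Hx]; [|exfalso; eauto].
    exists a; split; [left; reflexivity|split; [exact Qx|]].
    intros b [<-|Hb] Qb; [apply lt_irrefl|exfalso; eauto].
Qed.

Lemma list_strict_order_ind (L : list A) (P : A -> Prop) :
  (forall a, In a L -> (forall b, In b L -> lt b a -> P b) -> P a) ->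
  forall a, In a L -> P a.
Proof.
  intros Hstep a Ha. apply NNPP; intro HPa.
  destruct (list_exists_minimal L (fun b => ~ P b)) as [m [Hm [HPm Hmin]]];
    [now exists a|].
  apply HPm, Hstep; [exact Hm|].
  intros b Hb Hbm. apply NNPP; intro HPb. exact (Hmin b Hb HPb Hbm).
Qed.

End ListMinimal.

Lemma list_exists_argmin {A} (L : list A) (Q : A -> Prop) (f : A -> R) :
  (exists x, In x L /\ Q x) ->
  exists m, In m L /\ Q m /\ forall y, In y L -> Q y -> f m <= f y.
Proof.
  intros HQ.
  destruct (list_exists_minimal A (fun x y => f x < f y)) with (L := L) (Q := Q)
    as [m [Hm [Qm Hmin]]]; auto; [intros; lra|intros; lra|].
  exists m; repeat split; auto. intros y Hy Qy. apply Rnot_lt_le, Hmin; auto.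
Qed.

Lemma clos_refl_trans_sym {A} (E : relation A) :
  (forall x y, E x y -> E y x) ->
  forall x y, clos_refl_trans A E x y -> clos_refl_trans A E y x.
Proof.
  intros HE x y H; induction H; eauto using rt_step, rt_refl, rt_trans.
Qed.

Lemma clos_refl_trans_mono {A} (E F : relation A) :
  (forall x y, E x y -> F x y) ->
  forall x y, clos_refl_trans A E x y -> clos_refl_trans A F x y.
Proof.
  intros HEF x y H; induction H; eauto using rt_step, rt_refl, rt_trans.
Qed.

(** * Trigonometric inequalities *)

Lemma sin_cos_sq (x : R) : sin x * sin x + cos x * cos x = 1.
Proof. pose proof (sin2_cos2 x) as H; unfold Rsqr in H; lra. Qed.

Lemma gt_PI3_of_cos_lt_half (t : R) : 0 <= t <= PI -> cos t < 1/2 -> PI/3 < t.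
Proof.
  intros Ht Hc. pose proof PI_RGT_0. apply Rnot_le_lt; intro Hle.
  pose proof (cos_decr_1 t (PI/3)) as Hcos; rewrite cos_PI3 in Hcos. lra.
Qed.

Lemma cos_le_neg_half (x : R) : PI <= x <= PI + PI/3 -> cos x <= -(1/2).
Proof.
  intros Hx. pose proof PI_RGT_0.
  pose proof (cos_incr_1 x (PI/3 + PI)) as Hcos.
  rewrite neg_cos, cos_PI3 in Hcos. lra.
Qed.

Lemma one_sub_cos_le_sin (t : R) : 0 <= cos t -> 0 <= sin t -> 1 - cos t <= sin t.
Proof. intros Hc Hs. pose proof (sin_cos_sq t). pose proof (COS_bound t). nra. Qed.

Lemma cos_sum_corner_ineq (t p : R) : 0 <= t <= PI/2 -> 0 <= p <= PI/2 ->
  1 - cos t - cos p + cos (t + p) <= 0.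
Proof.
  intros Ht Hp. pose proof PI_RGT_0.
  assert (Hct : 0 <= cos t) by (apply cos_ge_0; lra).
  assert (Hcp : 0 <= cos p) by (apply cos_ge_0; lra).
  assert (Hst : 0 <= sin t) by (apply sin_ge_0; lra).
  assert (Hsp : 0 <= sin p) by (apply sin_ge_0; lra).
  pose proof (one_sub_cos_le_sin t Hct Hst). pose proof (one_sub_cos_le_sin p Hcp Hsp).
  pose proof (COS_bound t). pose proof (COS_bound p).
  rewrite cos_plus. nra.
Qed.

Lemma cos_double_corner_ineq (t p : R) : PI/3 < t -> PI/3 < p -> t + p <= 5*PI/6 ->
  1 - 2 * cos p + 4 * cos t * cos (t + p) <= 0.
Proof.
  intros Ht Hp Htp.
  assert (Hprod : 4 * cos t * cos (t + p) = 2 * (cos (t + (t + p)) + cos p)).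
  { assert (Hcp : cos p = cos (t + p) * cos t + sin (t + p) * sin t)
      by (rewrite <- cos_minus; f_equal; ring).
    rewrite Hcp, (cos_plus t (t + p)). ring. }
  rewrite Hprod. pose proof (cos_le_neg_half (t + (t + p))). lra.
Qed.

Lemma bilinear_box_neg (d a b C r s : R) :
  0 < d -> 0 < a -> 0 < b -> C < 0 ->
  2 * d * a <= r < d -> 2 * d * b <= s < d ->
  1 - 2 * b + 4 * a * C <= 0 -> 1 - 2 * a + 4 * b * C <= 0 -> 1 - a - b + C <= 0 ->
  r * (r - 2 * d * a) + s * (s - 2 * d * b) + 2 * C * r * s < 0.
Proof.
  intros Hd Ha Hb HC Hr Hs K01 K10 K11.
  set (x := r - 2 * d * a); set (y := s - 2 * d * b).
  set (X := d * (1 - 2 * a)); set (Y := d * (1 - 2 * b)).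
  set (g := d * x + d * y + 2 * C * r * s).
  (* [g] is bilinear in [(x, y)] on the box [[0, X] x [0, Y]]: interpolate its corner values. *)
  assert (Hinterp : X * Y * g =
    (X - x) * (Y - y) * (8 * C * (d * d * a * b)) + x * (Y - y) * (d * d * (1 - 2 * a + 4 * b * C))
    + (X - x) * y * (d * d * (1 - 2 * b + 4 * a * C)) + x * y * (2 * d * d * (1 - a - b + C))).
  { unfold g, x, y, X, Y. ring. }
  assert (Hdd : 0 < d * d) by nra.
  assert (Hx : 0 <= x < X) by (unfold x, X; lra).
  assert (Hy : 0 <= y < Y) by (unfold y, Y; lra).
  assert (T00 : (X - x) * (Y - y) * (8 * C * (d * d * a * b)) < 0).
  { assert (0 < (X - x) * (Y - y) * (d * d * a * b))
      by (repeat apply Rmult_lt_0_compat; lra).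
    replace ((X - x) * (Y - y) * (8 * C * (d * d * a * b)))
      with (8 * C * ((X - x) * (Y - y) * (d * d * a * b))) by ring.
    nra. }
  assert (T10 : x * (Y - y) * (d * d * (1 - 2 * a + 4 * b * C)) <= 0).
  { assert (0 <= x * (Y - y)) by nra. assert (d * d * (1 - 2 * a + 4 * b * C) <= 0) by nra. nra. }
  assert (T01 : (X - x) * y * (d * d * (1 - 2 * b + 4 * a * C)) <= 0).
  { assert (0 <= (X - x) * y) by nra. assert (d * d * (1 - 2 * b + 4 * a * C) <= 0) by nra. nra. }
  assert (T11 : x * y * (2 * d * d * (1 - a - b + C)) <= 0).
  { assert (0 <= x * y) by nra. assert (2 * d * d * (1 - a - b + C) <= 0) by nra. nra. }
  assert (Hg : g < 0).
  { assert (0 < X * Y) by (apply Rmult_lt_0_compat; lra). nra. }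
  unfold g in Hg. fold x y. nra.
Qed.

Lemma quadrilateral_coords (d r s t p : R) :
  0 < d -> 0 < r < d -> 0 < s < d -> 0 <= t <= PI -> 0 <= p <= PI -> t + p <= 5 * PI / 6 ->
  (r * cos t - d) ^ 2 + (r * sin t) ^ 2 >= d ^ 2 ->
  (d - s * cos p) ^ 2 + (s * sin p) ^ 2 >= d ^ 2 ->
  (r * cos t + s * cos p - d) ^ 2 + (r * sin t - s * sin p) ^ 2 < d ^ 2.
Proof.
  intros Hd Hr Hs Ht Hp Htp Hwv Hxu.
  pose proof (sin_cos_sq t). pose proof (sin_cos_sq p). pose proof PI_RGT_0.
  assert (Hrt : 2 * d * cos t <= r) by nra.
  assert (Hsp : 2 * d * cos p <= s) by nra.
  assert (Ht3 : PI / 3 < t) by (apply gt_PI3_of_cos_lt_half; nra).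
  assert (Hp3 : PI / 3 < p) by (apply gt_PI3_of_cos_lt_half; nra).
  assert (Hct : 0 < cos t) by (apply cos_gt_0; lra).
  assert (Hcp : 0 < cos p) by (apply cos_gt_0; lra).
  assert (Hctp : cos (t + p) < 0) by (apply cos_lt_0; lra).
  pose proof (cos_double_corner_ineq t p Ht3 Hp3 Htp) as K01.
  pose proof (cos_double_corner_ineq p t Hp3 Ht3 ltac:(lra)) as K10.
  rewrite (Rplus_comm p t) in K10.
  pose proof (cos_sum_corner_ineq t p ltac:(lra) ltac:(lra)) as K11.
  pose proof (bilinear_box_neg d (cos t) (cos p) (cos (t + p)) r s
                Hd Hct Hcp Hctp ltac:(lra) ltac:(lra) K01 K10 K11) as Hbox.
  rewrite cos_plus in Hbox. nra.
Qed.

(** * Polar angles and the frame of an edge *)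

Definition polar_angle (x y : R) : R :=
  if Rlt_dec y 0 then - acos (x / sqrt (x * x + y * y)) else acos (x / sqrt (x * x + y * y)).

Lemma polar_angle_spec (x y : R) : x * x + y * y <> 0 ->
  - PI < polar_angle x y <= PI /\
  x = sqrt (x * x + y * y) * cos (polar_angle x y) /\
  y = sqrt (x * x + y * y) * sin (polar_angle x y).
Proof.
  intros Hnz. set (n := sqrt (x * x + y * y)).
  assert (Hn : 0 < n) by (apply sqrt_lt_R0; nra).
  assert (Hn2 : n * n = x * x + y * y) by (apply sqrt_sqrt; nra).
  set (c := x / n).
  assert (Hxc : x = n * c) by (unfold c; field; lra).
  assert (Hc : -1 <= c <= 1) by (split; apply (Rmult_le_reg_l n); nra).
  assert (Hsin : sqrt (1 - c * c) = Rabs y / n).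
  { rewrite <- (sqrt_Rsqr (Rabs y / n)).
    - assert (Ey : Rabs y * Rabs y = y * y)
        by (rewrite <- Rabs_mult; apply Rabs_pos_eq; nra).
      f_equal. unfold Rsqr, c.
      replace (Rabs y / n * (Rabs y / n)) with (y * y / (n * n)) by (rewrite <- Ey; field; lra).
      replace (1 - x / n * (x / n)) with ((n * n - x * x) / (n * n)) by (field; lra).
      rewrite Hn2. f_equal. ring.
    - apply Rmult_le_pos; [apply Rabs_pos|left; apply Rinv_0_lt_compat; lra]. }
  pose proof PI_RGT_0.
  unfold polar_angle; fold n; fold c. destruct (Rlt_dec y 0) as [Hy|Hy].
  - assert (-1 < c < 1) by (split; apply (Rmult_lt_reg_l n); nra).
    pose proof (acos_bound_lt c ltac:(lra)).
    rewrite <- cos_sym, sin_antisym, cos_acos, sin_acos by lra. unfold Rsqr.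
    rewrite Hsin, Rabs_left by lra. repeat split; [lra|lra|auto|field; lra].
  - pose proof (acos_bound c).
    rewrite cos_acos, sin_acos by lra. unfold Rsqr.
    rewrite Hsin, Rabs_pos_eq by lra. repeat split; [lra|lra|auto|field; lra].
Qed.

Lemma dist_sq (p q : point) :
  dist p q * dist p q = (fst p - fst q) * (fst p - fst q) + (snd p - snd q) * (snd p - snd q).
Proof. unfold dist. rewrite sqrt_sqrt by (apply Rplus_le_le_0_compat; apply pow2_ge_0). ring. Qed.

Lemma dist_nonneg (p q : point) : 0 <= dist p q.
Proof. apply sqrt_pos. Qed.

Lemma dist_sym (p q : point) : dist p q = dist q p.
Proof. unfold dist; f_equal; ring. Qed.

Lemma dist_pos (p q : point) : p <> q -> 0 < dist p q.
Proof.
  intros Hpq. destruct (dist_nonneg p q) as [|E]; [assumption|exfalso].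
  pose proof (dist_sq p q) as Hsq. rewrite <- E in Hsq.
  apply Hpq. destruct p as [p1 p2], q as [q1 q2]; simpl in *.
  destruct (Rplus_sqr_eq_0 (p1 - q1) (p2 - q2)) as [E1 E2]; [unfold Rsqr; lra|].
  f_equal; lra.
Qed.

Definition heading (u v : point) : R := polar_angle (fst v - fst u) (snd v - snd u).

(* Coordinates of [p] in the orthonormal frame with origin [u] whose first axis points to [v]. *)
Definition frame_x (u v p : point) : R :=
  (fst p - fst u) * cos (heading u v) + (snd p - snd u) * sin (heading u v).
Definition frame_y (u v p : point) : R :=
  - (fst p - fst u) * sin (heading u v) + (snd p - snd u) * cos (heading u v).

Definition bearing (u v p : point) : R := polar_angle (frame_x u v p) (frame_y u v p).

Lemma heading_spec (u v : point) : u <> v ->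
  fst v - fst u = dist u v * cos (heading u v) /\ snd v - snd u = dist u v * sin (heading u v).
Proof.
  intros Huv. unfold heading.
  destruct (polar_angle_spec (fst v - fst u) (snd v - snd u)) as [_ Hpol].
  - intro E. pose proof (dist_pos u v Huv). pose proof (dist_sq u v). nra.
  - unfold dist. replace ((fst u - fst v) ^ 2 + (snd u - snd v) ^ 2) with
      ((fst v - fst u) * (fst v - fst u) + (snd v - snd u) * (snd v - snd u)) by ring.
    exact Hpol.
Qed.

Lemma frame_dist_sq (u v p q : point) : dist p q * dist p q =
  (frame_x u v p - frame_x u v q) * (frame_x u v p - frame_x u v q)
  + (frame_y u v p - frame_y u v q) * (frame_y u v p - frame_y u v q).
Proof.
  rewrite dist_sq. unfold frame_x, frame_y. pose proof (sin_cos_sq (heading u v)) as Hsc.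
  set (c := cos (heading u v)) in *; set (s := sin (heading u v)) in *.
  transitivity (((fst p - fst q) * (fst p - fst q) + (snd p - snd q) * (snd p - snd q)) * (s * s + c * c));
    [rewrite Hsc|]; ring.
Qed.

Lemma frame_x_origin (u v : point) : frame_x u v u = 0.
Proof. unfold frame_x; ring. Qed.

Lemma frame_y_origin (u v : point) : frame_y u v u = 0.
Proof. unfold frame_y; ring. Qed.

Lemma frame_x_target (u v : point) : u <> v -> frame_x u v v = dist u v.
Proof.
  intros Huv. destruct (heading_spec u v Huv) as [E1 E2]. unfold frame_x. rewrite E1, E2.
  pose proof (sin_cos_sq (heading u v)) as Hsc.
  transitivity (dist u v * (sin (heading u v) * sin (heading u v) + cos (heading u v) * cos (heading u v)));
    [ring|rewrite Hsc; ring].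
Qed.

Lemma frame_y_target (u v : point) : u <> v -> frame_y u v v = 0.
Proof. intros Huv. destruct (heading_spec u v Huv) as [E1 E2]. unfold frame_y. rewrite E1, E2. ring. Qed.

Lemma bearing_spec (u v p : point) : p <> u ->
  - PI < bearing u v p <= PI /\
  frame_x u v p = dist u p * cos (bearing u v p) /\ frame_y u v p = dist u p * sin (bearing u v p).
Proof.
  intros Hpu.
  pose proof (frame_dist_sq u v p u) as Hd. rewrite frame_x_origin, frame_y_origin in Hd.
  assert (Hnorm : sqrt (frame_x u v p * frame_x u v p + frame_y u v p * frame_y u v p) = dist u p).
  { rewrite dist_sym, <- (sqrt_square (dist p u)) by apply dist_nonneg.
    f_equal. rewrite Hd. ring. }
  unfold bearing. rewrite <- Hnorm. apply polar_angle_spec.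
  pose proof (dist_pos p u Hpu). nra.
Qed.

Lemma heading_swap (u v : point) : u <> v ->
  cos (heading v u) = - cos (heading u v) /\ sin (heading v u) = - sin (heading u v).
Proof.
  intros Huv. destruct (heading_spec u v Huv) as [E1 E2].
  destruct (heading_spec v u (not_eq_sym Huv)) as [E3 E4].
  rewrite dist_sym in E3, E4. pose proof (dist_pos u v Huv).
  split; apply (Rmult_eq_reg_l (dist u v)); lra.
Qed.

Lemma frame_x_swap (u v p : point) : u <> v -> frame_x v u p = dist u v - frame_x u v p.
Proof.
  intros Huv. destruct (heading_swap u v Huv) as [E1 E2]. rewrite <- (frame_x_target u v Huv).
  unfold frame_x. rewrite E1, E2. ring.
Qed.

Lemma frame_y_swap (u v p : point) : u <> v -> frame_y v u p = - frame_y u v p.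
Proof.
  intros Huv. destruct (heading_swap u v Huv) as [E1 E2]. pose proof (frame_y_target u v Huv) as E.
  unfold frame_y in *. rewrite E1, E2. lra.
Qed.

(** * Gap-free neighbourhoods *)

Lemma cos_sin_eq_congruent (a b : R) :
  cos a = cos b -> sin a = sin b -> exists k : Z, a = b + 2 * IZR k * PI.
Proof.
  intros Hc Hs.
  assert (H1 : cos (a - b) = 1) by (rewrite cos_minus, <- Hc, <- Hs; pose proof (sin_cos_sq a); lra).
  assert (H2 : sin ((a - b) / 2) = 0).
  { pose proof (cos_2a_sin ((a - b) / 2)) as E. replace (2 * ((a - b) / 2)) with (a - b) in E by field.
    nra. }
  destruct (sin_eq_0_0 _ H2) as [k Hk]. exists k. lra.
Qed.

Lemma principal_angle_window (f lo hi : R) (k : Z) : - PI < f <= PI -> - PI < lo -> hi <= PI ->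
  lo <= f + 2 * IZR k * PI <= hi -> lo <= f <= hi.
Proof.
  intros Hf Hlo Hhi Hw. pose proof PI_RGT_0.
  destruct (Z.lt_trichotomy k 0) as [Hk|[->|Hk]].
  - assert (IZR k <= -1) by (apply IZR_le; lia). nra.
  - simpl in Hw. lra.
  - assert (1 <= IZR k) by (apply IZR_le; lia). nra.
Qed.

Lemma gap_free_cone_window (u v : point) (alpha m : R) (A : point -> Prop) :
  u <> v -> (forall p, A p -> p <> u) -> ~ has_gap alpha u A ->
  - PI < m - alpha / 2 -> m + alpha / 2 <= PI ->
  exists p, A p /\ m - alpha / 2 <= bearing u v p <= m + alpha / 2.
Proof.
  intros Huv HA Hgap Hlo Hhi.
  assert (exists p, A p /\ in_cone u (heading u v + m) alpha p) as [p [Ap [t [phi [Ht [Hphi Ep]]]]]].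
  { apply NNPP. intro Hn. apply Hgap. exists (heading u v + m). intros p Ap Hc. apply Hn. eauto. }
  exists p. split; [exact Ap|].
  destruct (bearing_spec u v p (HA p Ap)) as [Hb [E1 E2]].
  assert (Ex : frame_x u v p = t * cos (phi - heading u v))
    by (unfold frame_x; rewrite Ep, cos_minus; simpl; ring).
  assert (Ey : frame_y u v p = t * sin (phi - heading u v))
    by (unfold frame_y; rewrite Ep, sin_minus; simpl; ring).
  assert (Edt : dist u p = t).
  { pose proof (frame_dist_sq u v p u) as E.
    rewrite frame_x_origin, frame_y_origin, Ex, Ey in E.
    pose proof (sin_cos_sq (phi - heading u v)) as Hsc.
    rewrite dist_sym. apply Rsqr_inj; [apply dist_nonneg|lra|]. unfold Rsqr. rewrite E.
    transitivity (t * t * (sin (phi - heading u v) * sin (phi - heading u v)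
                           + cos (phi - heading u v) * cos (phi - heading u v)));
      [ring|rewrite Hsc; ring]. }
  assert (Htp : 0 < t) by (rewrite <- Edt; apply dist_pos, not_eq_sym, HA, Ap).
  rewrite Edt in E1, E2.
  assert (C1 : cos (phi - heading u v) = cos (bearing u v p)) by (apply (Rmult_eq_reg_l t); lra).
  assert (C2 : sin (phi - heading u v) = sin (bearing u v p)) by (apply (Rmult_eq_reg_l t); lra).
  destruct (cos_sin_eq_congruent _ _ C1 C2) as [k Hk].
  apply (principal_angle_window _ _ _ k Hb Hlo Hhi). rewrite <- Hk. lra.
Qed.

(* Take the nodes of [A] of least positive and greatest non-positive bearing: a wider angle between
   them would leave an empty cone of width [alpha]. *)
Lemma gap_free_straddling_pair (V : list point) (u v : point) (alpha : R) (A : point -> Prop) :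
  u <> v -> (forall p, A p -> In p V /\ p <> u) -> ~ has_gap alpha u A -> 0 < alpha < PI ->
  exists p q, A p /\ A q /\ 0 < bearing u v p /\ bearing u v q <= 0 /\
              bearing u v p - bearing u v q <= alpha.
Proof.
  intros Huv HA Hgap Ha. pose proof PI_RGT_0.
  assert (HA' : forall p, A p -> p <> u) by (intros; apply HA; auto).
  destruct (gap_free_cone_window u v alpha (PI / 2) A Huv HA' Hgap ltac:(lra) ltac:(lra))
    as [p0 [Ap0 Hp0]].
  destruct (gap_free_cone_window u v alpha (- (PI / 2)) A Huv HA' Hgap ltac:(lra) ltac:(lra))
    as [q0 [Aq0 Hq0]].
  destruct (list_exists_argmin V (fun p => A p /\ 0 < bearing u v p) (bearing u v))
    as [p [_ [[Ap Hp] Hpmin]]]; [exists p0; split; [apply HA|split]; auto; lra|].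
  destruct (list_exists_argmin V (fun q => A q /\ bearing u v q <= 0) (fun q => - bearing u v q))
    as [q [_ [[Aq Hq] Hqmax]]]; [exists q0; split; [apply HA|split]; auto; lra|].
  exists p, q. do 4 (split; [assumption|]).
  apply Rnot_lt_le. intro Hwide.
  destruct (bearing_spec u v p (HA' p Ap)) as [Bp _].
  destruct (bearing_spec u v q (HA' q Aq)) as [Bq _].
  destruct (gap_free_cone_window u v alpha ((bearing u v p + bearing u v q) / 2) A
              Huv HA' Hgap ltac:(lra) ltac:(lra)) as [x [Ax Hx]].
  destruct (Rlt_le_dec 0 (bearing u v x)) as [Hx0|Hx0].
  - specialize (Hpmin x (proj1 (HA x Ax)) (conj Ax Hx0)). lra.
  - specialize (Hqmax x (proj1 (HA x Ax)) (conj Ax Hx0)). lra.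
Qed.

Lemma half_lt_of_acos_lt_PI3 (c : R) : acos c < PI / 3 -> 1 / 2 < c.
Proof.
  intros H. pose proof PI_RGT_0. apply Rnot_le_lt. intro Hc.
  destruct (Rle_dec c (-1)) as [Hm|Hm].
  - unfold acos in H. destruct (Rle_dec c (-1)); [lra|contradiction].
  - pose proof (acos_bound c). pose proof (cos_acos c ltac:(lra)) as Hcos.
    pose proof (cos_decreasing_1 (acos c) (PI / 3)) as Hdec. rewrite cos_PI3, Hcos in Hdec. lra.
Qed.

Lemma dist_lt_of_angle_lt_PI3 (u v w : point) :
  angle v u w < PI / 3 -> v <> u -> w <> u -> dist u w <= dist u v -> dist w v < dist u v.
Proof.
  intros Ha Hv Hw Hle.
  unfold angle in Ha. apply half_lt_of_acos_lt_PI3 in Ha.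
  set (dot := (fst v - fst u) * (fst w - fst u) + (snd v - snd u) * (snd w - snd u)) in *.
  pose proof (dist_pos u v (not_eq_sym Hv)). pose proof (dist_pos u w (not_eq_sym Hw)).
  assert (Hdot : dist u v * dist u w / 2 < dot).
  { apply (Rmult_lt_compat_r (dist u v * dist u w)) in Ha; [|nra].
    replace (dot / (dist u v * dist u w) * (dist u v * dist u w)) with dot in Ha by (field; lra).
    lra. }
  pose proof (dist_sq w v). pose proof (dist_sq u v). pose proof (dist_sq u w).
  pose proof (dist_nonneg w v). unfold dot in Hdot. nra.
Qed.

(* In the frame of [u] and [v], [w] and [t] are the points [(r cos th, r sin th)] and [(d - s cos ps, s sin ps)]. *)
Lemma quadrilateral_dist_lt (u v w t : point) :
  u <> v -> w <> u -> t <> v ->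
  0 < bearing u v w -> bearing v u t <= 0 -> bearing u v w - bearing v u t <= 5 * PI / 6 ->
  dist u w < dist u v -> dist v t < dist u v -> dist u v <= dist w v -> dist u v <= dist t u ->
  dist w t < dist u v.
Proof.
  intros Huv Hwu Htv Hw Ht Hwt Huw Hvt Hwv Htu.
  set (d := dist u v) in *. assert (Hd : 0 < d) by (apply dist_pos, Huv).
  destruct (bearing_spec u v w Hwu) as [Bw [Xw Yw]].
  destruct (bearing_spec v u t Htv) as [Bt [Xt Yt]].
  set (th := bearing u v w) in *. set (ps := - bearing v u t).
  rewrite frame_x_swap in Xt by exact Huv. rewrite frame_y_swap in Yt by exact Huv. fold d in Xt.
  assert (Xt' : frame_x u v t = d - dist v t * cos ps) by (unfold ps; rewrite <- cos_sym; lra).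
  assert (Yt' : frame_y u v t = dist v t * sin ps) by (unfold ps; rewrite sin_antisym; lra).
  pose proof (dist_pos u w (not_eq_sym Hwu)). pose proof (dist_pos v t (not_eq_sym Htv)).
  pose proof (frame_dist_sq u v w v) as Ewv. pose proof (frame_dist_sq u v t u) as Etu.
  pose proof (frame_dist_sq u v w t) as Ewt.
  rewrite frame_x_target, frame_y_target in Ewv by exact Huv.
  rewrite frame_x_origin, frame_y_origin in Etu.
  rewrite Xw, Yw in Ewv, Ewt. rewrite Xt', Yt' in Etu, Ewt. fold d in Ewv.
  pose proof (quadrilateral_coords d (dist u w) (dist v t) th ps Hd
                ltac:(lra) ltac:(lra) ltac:(unfold ps; lra) ltac:(unfold ps; lra) ltac:(unfold ps; lra))
    as Hquad.
  simpl in Hquad. specialize (Hquad ltac:(nra) ltac:(nra)).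
  pose proof (dist_nonneg w t).
  assert (dist w t * dist w t < d * d) by (rewrite Ewt; nra).
  nra.
Qed.

(** * Connectivity of the non-redundant CBTC graph *)

Section CBTCConnectivity.
Variables (V : list point) (ID : point -> Z) (k : nat) (r : nat -> R) (alpha : R).
Hypotheses (Hk : (1 <= k)%nat) (Hrinc : forall i, (1 <= i < k)%nat -> r i < r (S i))
           (Ha0 : 0 < alpha) (Ha1 : alpha <= 5 * PI / 6).

Let conn := connected_in (Enr V r k alpha ID).

Lemma eid_gt_trans (a b c d e f : point) :
  eid_gt ID a b c d -> eid_gt ID c d e f -> eid_gt ID a b e f.
Proof. unfold eid_gt. intros [H1|[H1 H1']] [H2|[H2 H2']]; [left; lra..|right; split; [lra|lia]]. Qed.

Lemma eid_gt_irrefl (a b : point) : ~ eid_gt ID a b a b.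
Proof. unfold eid_gt. intros [H|[_ H]]; [lra|lia]. Qed.

Lemma eid_gt_swap (u v x y : point) : eid_gt ID u v x y -> eid_gt ID v u x y.
Proof. unfold eid_gt. rewrite (dist_sym v u), (Z.max_comm (ID v)), (Z.min_comm (ID v)). auto. Qed.

Lemma eid_gt_of_dist_lt (u v x y : point) : dist x y < dist u v -> eid_gt ID u v x y.
Proof. unfold eid_gt; lra. Qed.

Lemma dist_le_of_eid_gt (u v w : point) : eid_gt ID u v u w -> dist u w <= dist u v.
Proof. unfold eid_gt; intros [H|[H _]]; lra. Qed.

Lemma r_le_last (i : nat) : (1 <= i <= k)%nat -> r i <= r k.
Proof.
  intros Hi. remember (k - i)%nat as n eqn:Hn. revert i Hi Hn.
  induction n as [|n IH]; intros i Hi Hn.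
  - replace i with k by lia. lra.
  - pose proof (Hrinc i ltac:(lia)). pose proof (IH (S i) ltac:(lia) ltac:(lia)). lra.
Qed.

Lemma exists_iu (u : point) : exists i, is_iu V r k alpha u i.
Proof.
  destruct (classic (exists j, In j (seq 1 k) /\ ~ has_gap alpha u (Sball V r j u))) as [Hex|Hno].
  - destruct (list_exists_minimal nat lt ltac:(intros; lia) ltac:(intros; lia) _ _ Hex)
      as [i [Hi [Hgap Hmin]]].
    apply in_seq in Hi. exists i. split; [lia|left; split; [exact Hgap|]].
    intros j Hj. apply NNPP. intro Hn. apply (Hmin j); [apply in_seq; lia|exact Hn|lia].
  - exists k. split; [lia|right; split; [reflexivity|]].
    intros j Hj. apply NNPP. intro Hn. apply Hno. exists j. split; [apply in_seq; lia|exact Hn].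
Qed.

Lemma Nalpha_GR_edge (u v : point) : Nalpha V r k alpha u v -> GR_edge V (r k) u v.
Proof.
  intros [Hu [i [[Hi _] [Hv [Hvu Hd]]]]]. pose proof (r_le_last i Hi).
  repeat split; auto; lra.
Qed.

Lemma Ealpha_GR_edge (u v : point) : Ealpha V r k alpha u v -> GR_edge V (r k) u v.
Proof.
  intros [H|H]; apply Nalpha_GR_edge in H; [exact H|].
  destruct H as [? [? [? ?]]]. rewrite dist_sym in *. repeat split; auto.
Qed.

Lemma conn_sym (u v : point) : conn u v -> conn v u.
Proof. apply clos_refl_trans_sym. unfold Enr, redundant, Ealpha. tauto. Qed.

Lemma conn_via (u w v : point) : conn u w -> conn w v -> conn u v.
Proof. apply rt_trans. Qed.

Lemma short_gap_free_neighbourhood (u v : point) :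
  In u V -> In v V -> u <> v -> dist u v <= r k -> ~ Nalpha V r k alpha u v ->
  exists i, (forall p, Sball V r i u p -> In p V /\ p <> u /\ dist u p < dist u v)
       /\ ~ has_gap alpha u (Sball V r i u).
Proof.
  intros Hu Hv Huv Hd HN. destruct (exists_iu u) as [i Hi].
  assert (Hlt : r i < dist u v).
  { apply Rnot_le_lt. intro Hle. apply HN. split; [exact Hu|].
    exists i. exact (conj Hi (conj Hv (conj (not_eq_sym Huv) Hle))). }
  exists i. split.
  - intros p [Hp [Hpu Hdp]]. repeat split; auto; lra.
  - destruct Hi as [_ [[Hgap _]|[-> _]]]; [exact Hgap|lra].
Qed.

(* The two straddling pairs at [u] and at [v] together subtend at most [2 alpha], so one of the two
   quadrilaterals they span has angle sum at most [alpha <= 5 PI / 6]. *)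
Lemma gap_free_bridge (u v : point) (A B : point -> Prop) :
  u <> v ->
  (forall p, A p -> In p V /\ p <> u /\ dist u p < dist u v) ->
  (forall q, B q -> In q V /\ q <> v /\ dist v q < dist u v) ->
  ~ has_gap alpha u A -> ~ has_gap alpha v B ->
  (forall p, A p -> dist u v <= dist p v) -> (forall q, B q -> dist u v <= dist q u) ->
  exists p q, A p /\ B q /\ dist p q < dist u v.
Proof.
  intros Huv HA HB HgA HgB HfarA HfarB. pose proof PI_RGT_0.
  destruct (gap_free_straddling_pair V u v alpha A Huv ltac:(intros p Ap; apply HA in Ap; tauto)
              HgA ltac:(lra)) as [p [q [Ap [Aq [Hp [Hq Hpq]]]]]].
  destruct (gap_free_straddling_pair V v u alpha B (not_eq_sym Huv)
              ltac:(intros x Bx; apply HB in Bx; tauto) HgB ltac:(lra))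
    as [p' [q' [Bp' [Bq' [Hp' [Hq' Hpq']]]]]].
  destruct (HA p Ap) as [_ [Hpu Hup]]. destruct (HA q Aq) as [_ [Hqu Huq]].
  destruct (HB p' Bp') as [_ [Hp'v Hvp']]. destruct (HB q' Bq') as [_ [Hq'v Hvq']].
  destruct (Rle_dec (bearing u v p - bearing v u q') alpha) as [Hsum|Hsum].
  - exists p, q'. repeat split; auto.
    apply quadrilateral_dist_lt; auto; lra.
  - exists q, p'. repeat split; auto. rewrite dist_sym.
    rewrite (dist_sym u v) in *.
    apply quadrilateral_dist_lt; auto; lra.
Qed.

Lemma non_edge_connected (u v : point) :
  In u V -> In v V -> u <> v -> dist u v <= r k -> ~ Ealpha V r k alpha u v ->
  (forall x y, In x V -> In y V -> dist x y < dist u v -> conn x y) -> conn u v.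
Proof.
  intros Hu Hv Huv Hd HnE IH.
  destruct (short_gap_free_neighbourhood u v Hu Hv Huv Hd ltac:(intro; apply HnE; left; auto))
    as [i [HA HgA]].
  destruct (short_gap_free_neighbourhood v u Hv Hu (not_eq_sym Huv) ltac:(rewrite dist_sym; exact Hd)
              ltac:(intro; apply HnE; right; auto)) as [j [HB HgB]].
  rewrite (dist_sym v u) in HB.
  destruct (classic (exists p, Sball V r i u p /\ dist p v < dist u v)) as [[p [Ap Hpv]]|HfarA].
  { destruct (HA p Ap) as [Hp [_ Hup]]. apply conn_via with p; apply IH; auto. }
  destruct (classic (exists q, Sball V r j v q /\ dist q u < dist u v)) as [[q [Bq Hqu]]|HfarB].
  { destruct (HB q Bq) as [Hq [_ Hvq]]. apply conn_sym, conn_via with q; apply IH; auto. }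
  destruct (gap_free_bridge u v _ _ Huv HA HB HgA HgB) as [p [q [Ap [Bq Hpq]]]].
  - intros p Ap. apply Rnot_lt_le. intro. apply HfarA. eauto.
  - intros q Bq. apply Rnot_lt_le. intro. apply HfarB. eauto.
  - destruct (HA p Ap) as [Hp [_ Hup]]. destruct (HB q Bq) as [Hq [_ Hvq]].
    apply conn_via with p; [apply IH; auto|].
    apply conn_via with q; apply IH; auto. rewrite dist_sym; exact Hvq.
Qed.

Lemma redundant_connected (u v : point) :
  In u V -> In v V -> redundant V r k alpha ID u v ->
  (forall x y, In x V -> In y V -> eid_gt ID u v x y -> conn x y) -> conn u v.
Proof.
  intros Hu Hv [Huv Hred] IH.
  destruct (Ealpha_GR_edge u v Huv) as [_ [_ [Hne _]]].
  destruct Hred as [[w [Hw [Huw [Hang Heid]]]]|[w [Hw [Hvw [Hang Heid]]]]].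
  - destruct (Ealpha_GR_edge u w Huw) as [_ [_ [Hnw _]]].
    apply conn_via with w; apply IH; auto.
    apply eid_gt_of_dist_lt, dist_lt_of_angle_lt_PI3; auto.
    eapply dist_le_of_eid_gt; eauto.
  - destruct (Ealpha_GR_edge v w Hvw) as [_ [_ [Hnw _]]].
    apply conn_sym, conn_via with w; apply IH; auto.
    + apply eid_gt_swap; exact Heid.
    + apply eid_gt_of_dist_lt. rewrite (dist_sym u v).
      apply dist_lt_of_angle_lt_PI3; auto. eapply dist_le_of_eid_gt; eauto.
Qed.

Lemma GR_edge_connected (u v : point) : In u V -> In v V -> dist u v <= r k -> conn u v.
Proof.
  intros Hu Hv.
  refine (list_strict_order_ind (point * point)
            (fun a b => eid_gt ID (fst b) (snd b) (fst a) (snd a))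
            (fun a b c Hab Hbc => eid_gt_trans _ _ _ _ _ _ Hbc Hab)
            (fun a => eid_gt_irrefl (fst a) (snd a))
            (list_prod V V) (fun a => dist (fst a) (snd a) <= r k -> conn (fst a) (snd a))
            _ (u, v) (in_prod V V u v Hu Hv)).
  clear u v Hu Hv. intros [u v] Huv IH Hd. simpl in *.
  apply in_prod_iff in Huv as [Hu Hv].
  assert (IHeid : forall x y, In x V -> In y V -> eid_gt ID u v x y -> conn x y).
  { intros x y Hx Hy Hxy. apply (IH (x, y)); [apply in_prod; auto|exact Hxy|].
    destruct Hxy as [H|[H _]]; simpl; lra. }
  destruct (classic (u = v)) as [<-|Hne]; [apply rt_refl|].
  destruct (classic (Ealpha V r k alpha u v)) as [HE|HnE].
  - destruct (classic (redundant V r k alpha ID u v)) as [Hred|Hnr].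
    + exact (redundant_connected u v Hu Hv Hred IHeid).
    + apply rt_step. split; assumption.
  - apply non_edge_connected; auto.
    intros x y Hx Hy Hxy. apply IHeid; auto. apply eid_gt_of_dist_lt, Hxy.
Qed.

End CBTCConnectivity.

Theorem theorem5
  (V : list point) (ID : point -> Z) (k : nat) (r : nat -> R) (Rmax alpha : R)
  (HV : NoDup V)
  (HID : forall p q, In p V -> In q V -> ID p = ID q -> p = q)
  (Hk : (1 <= k)%nat)
  (Hr1 : 0 < r 1%nat)
  (Hrinc : forall i, (1 <= i < k)%nat -> r i < r (S i))
  (HrR : r k = Rmax)
  (Ha0 : 0 < alpha) (Ha1 : alpha <= 5 * PI / 6) :
  (forall u v, In u V -> In v V ->
     (connected_in (Enr V r k alpha ID) u v <-> connected_in (GR_edge V Rmax) u v))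
  /\
  (forall u v, redundant V r k alpha ID u v ->
     connected_in (Enr V r k alpha ID) u v).
Proof.
  subst Rmax.
  assert (Hedge : forall u v, GR_edge V (r k) u v -> connected_in (Enr V r k alpha ID) u v).
  { intros u v (Hu & Hv & _ & Hd).
    exact (GR_edge_connected V ID k r alpha Hk Hrinc Ha0 Ha1 u v Hu Hv Hd). }
  split.
  - intros u v _ _. split.
    + apply clos_refl_trans_mono. intros x y [HE _].
      exact (Ealpha_GR_edge V k r alpha Hk Hrinc x y HE).
    + intros H. apply clos_rt_idempotent. revert H. apply clos_refl_trans_mono, Hedge.
  - intros u v [HE _]. exact (Hedge u v (Ealpha_GR_edge V k r alpha Hk Hrinc u v HE)).
Qed.
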